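(* Let $(\lambda_k)_{k\ge0}$ be a sequence of positive numbers, $\tau_0=0$ and $\tau_k=\sum_{i=0}^{k-1}\lambda_i$ for $k\ge1$. Suppose there exist $C_2>0$ and $a,b,c\ge0$ with $b+c>a$ such that $$\sum_{k\ge0}\tau_k^a\lambda_k^{-b}\lambda_{k+1}^{-c}\le C_2<+\infty$$ (with the convention $\tau_0^0=1$). Then there exists $C_3>0$ such that $\tau_{k+1}\ge C_3\,k^{\frac{b+c+1}{b+c-a}}$ for every $k\ge1$. *)

From Stdlib Require Import Reals.
Open Scope R_scope.

Fixpoint tau (lambda : nat -> R) (k : nat) : R :=
  match k with
  | O => 0
  | S k' => tau lambda k' + lambda k'
  end.

Definition rpow (x a : R) : R :=
  if Req_EM_T x 0 then (if Req_EM_T a 0 then 1 else 0) else Rpower x a.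

From Stdlib Require Import Reals Arith Lra Lia Psatz.
Open Scope R_scope.

(* Write s = b + c and mu_i = lambda_i + lambda_(i+1).  On a block of indices
   [m, m + n) every term of the series is at least tau_m^a mu_i^(-s), and by
   convexity of x |-> x^(-s) the sum of the mu_i^(-s) is at least
   n (2 tau_(m+n+1) / n)^(-s), because the mu_i sum to at most 2 tau_(m+n+1).
   Hence tau_m^a n^(1+s) <= C2 (2 tau_(m+n+1))^s.  Taking m = k/2 and n = k - m,
   this bounds tau_(k+1) from below through tau_(k/2); in logarithmic form it
   is a linear recursive inequality, and strong induction propagates the
   growth exponent p = (s + 1) / (s - a), the fixed point of p s = a p + 1 + s. *)

Lemma ln_le_compat x y : 0 < x -> x <= y -> ln x <= ln y.
Proof.
  intros hx hxy; destruct (Rle_lt_or_eq_dec _ _ hxy) as [h|h].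
  - left; apply ln_increasing; auto.
  - subst; lra.
Qed.

Lemma exp_le_compat x y : x <= y -> exp x <= exp y.
Proof.
  intros hxy; destruct (Rle_lt_or_eq_dec _ _ hxy) as [h|h].
  - left; apply exp_increasing; auto.
  - subst; lra.
Qed.

Lemma ln_INR_le_mult k c j : (1 <= k)%nat -> (1 <= j)%nat -> (k <= c * j)%nat ->
  ln (INR k) <= ln (INR c) + ln (INR j).
Proof.
  intros hk hj hkcj.
  assert (hc : (1 <= c)%nat) by nia.
  apply le_INR in hk, hj, hc, hkcj; rewrite mult_INR in hkcj; simpl in hk, hj, hc.
  rewrite <- ln_mult by lra; apply ln_le_compat; lra.
Qed.

Lemma rpow_pos_eq x a : 0 < x -> rpow x a = Rpower x a.
Proof. intros hx; unfold rpow; destruct Req_EM_T; [lra | reflexivity]. Qed.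

Lemma Rpower_opp_le_compat x y s : 0 < x <= y -> 0 <= s ->
  Rpower y (- s) <= Rpower x (- s).
Proof.
  intros hxy hs; rewrite !Rpower_Ropp.
  apply Rinv_le_contravar; [apply exp_pos | apply Rle_Rpower_l; auto].
Qed.

Lemma Rpower_opp_tangent x A s : 0 < x -> 0 < A -> 0 <= s ->
  Rpower A (- s) * (1 + s - s * (x / A)) <= Rpower x (- s).
Proof.
  intros hx hA hs.
  set (t := x / A).
  assert (ht : 0 < t) by (apply Rdiv_lt_0_compat; auto).
  assert (hln : ln t <= t - 1).
  { pose proof (exp_ineq1_le (ln t)) as h; rewrite exp_ln in h; lra. }
  replace (Rpower x (- s)) with (Rpower A (- s) * Rpower t (- s))
    by (rewrite Rpower_mult_distr by auto; f_equal; unfold t; field; lra).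
  apply Rmult_le_compat_l; [left; apply exp_pos |].
  pose proof (exp_ineq1_le (- s * ln t)); unfold Rpower; nra.
Qed.

Fixpoint sum_from (f : nat -> R) (m n : nat) : R :=
  match n with
  | O => 0
  | S n' => sum_from f m n' + f (m + n')%nat
  end.

Lemma sum_f_R0_sum_from f N : sum_f_R0 f N = sum_from f 0 (S N).
Proof. induction N as [|N IH]; simpl in *; [lra | rewrite IH; lra]. Qed.

Lemma sum_from_split f m n1 n2 :
  sum_from f m (n1 + n2) = sum_from f m n1 + sum_from f (m + n1) n2.
Proof.
  induction n2 as [|n2 IH]; simpl.
  - rewrite Nat.add_0_r; lra.
  - rewrite Nat.add_succ_r; simpl; rewrite IH, Nat.add_assoc; lra.
Qed.

Lemma sum_from_nonneg f m n : (forall i, 0 <= f i) -> 0 <= sum_from f m n.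
Proof. intros h; induction n; simpl; [lra | specialize (h (m + n)%nat); lra]. Qed.

Lemma sum_from_le f g m n : (forall i, (m <= i)%nat -> f i <= g i) ->
  sum_from f m n <= sum_from g m n.
Proof.
  intros h; induction n; simpl; [lra |].
  specialize (h (m + n)%nat ltac:(lia)); lra.
Qed.

Lemma sum_from_scal k f m n : sum_from (fun i => k * f i) m n = k * sum_from f m n.
Proof. induction n as [|n IH]; simpl; [ring | rewrite IH; ring]. Qed.

Lemma sum_from_le_of_partial_sums f C m n : (forall i, 0 <= f i) ->
  (forall N, sum_f_R0 f N <= C) -> sum_from f m n <= C.
Proof.
  intros hf hC.
  pose proof (sum_from_split f 0 m n) as hsplit.
  pose proof (sum_from_nonneg f 0 m hf).
  specialize (hC (m + n)%nat); specialize (hf (m + n)%nat).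
  rewrite sum_f_R0_sum_from in hC; simpl in hC, hsplit; lra.
Qed.

Lemma sum_Rpower_opp_tangent g A s m n : (forall i, 0 < g i) -> 0 < A -> 0 <= s ->
  Rpower A (- s) * (INR n * (1 + s) - s * (sum_from g m n / A))
  <= sum_from (fun i => Rpower (g i) (- s)) m n.
Proof.
  intros hg hA hs; induction n as [|n IH]; cbn [sum_from].
  - change (INR 0) with 0; unfold Rdiv; rewrite Rmult_0_l; lra.
  - pose proof (Rpower_opp_tangent (g (m + n)%nat) A s (hg _) hA hs).
    rewrite S_INR.
    replace (Rpower A (- s) * ((INR n + 1) * (1 + s) - s * ((sum_from g m n + g (m + n)%nat) / A)))
      with (Rpower A (- s) * (INR n * (1 + s) - s * (sum_from g m n / A))
            + Rpower A (- s) * (1 + s - s * (g (m + n)%nat / A))) by (field; lra).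
    lra.
Qed.

(* Jensen's inequality for the convex decreasing map x |-> x^(-s). *)
Lemma sum_Rpower_opp_ge g A s m n : (forall i, 0 < g i) -> 0 < A -> 0 <= s ->
  sum_from g m n <= INR n * A ->
  INR n * Rpower A (- s) <= sum_from (fun i => Rpower (g i) (- s)) m n.
Proof.
  intros hg hA hs hmean.
  pose proof (sum_Rpower_opp_tangent g A s m n hg hA hs).
  assert (sum_from g m n / A <= INR n).
  { apply (Rmult_le_reg_r A); [exact hA |].
    unfold Rdiv; rewrite Rmult_assoc, Rinv_l; lra. }
  assert (0 <= s * (INR n - sum_from g m n / A)) by (apply Rmult_le_pos; lra).
  assert (0 < Rpower A (- s)) by apply exp_pos.
  nra.
Qed.

Lemma sum_from_consecutive lam m n :
  sum_from (fun i => lam i + lam (S i)) m n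
  = (tau lam (m + n) - tau lam m) + (tau lam (S (m + n)) - tau lam (S m)).
Proof.
  induction n as [|n IH]; simpl.
  - rewrite Nat.add_0_r; ring.
  - rewrite IH, Nat.add_succ_r; simpl; ring.
Qed.

Section Tau.

Variable lambda : nat -> R.
Hypothesis hpos : forall k, 0 < lambda k.

Lemma tau_nonneg k : 0 <= tau lambda k.
Proof. induction k; simpl; [lra | specialize (hpos k); lra]. Qed.

Lemma tau_pos k : (1 <= k)%nat -> 0 < tau lambda k.
Proof.
  intros hk; destruct k as [|k]; [lia |]; simpl.
  pose proof (tau_nonneg k); specialize (hpos k); lra.
Qed.

Lemma tau_le m n : (m <= n)%nat -> tau lambda m <= tau lambda n.
Proof. induction 1 as [|n _ IH]; simpl; [lra | specialize (hpos n); lra]. Qed.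

Lemma sum_from_consecutive_le m n :
  sum_from (fun i => lambda i + lambda (S i)) m n <= 2 * tau lambda (S (m + n)).
Proof.
  rewrite sum_from_consecutive.
  pose proof (tau_le (m + n) (S (m + n)) ltac:(lia)).
  pose proof (tau_nonneg m); pose proof (tau_nonneg (S m)); lra.
Qed.

Variables a b c C2 : R.
Hypotheses (ha : 0 <= a) (hb : 0 <= b) (hc : 0 <= c).

Let term k := rpow (tau lambda k) a * Rpower (lambda k) (- b) * Rpower (lambda (S k)) (- c).

Hypothesis hsum : forall N, sum_f_R0 term N <= C2.

Lemma term_nonneg k : 0 <= term k.
Proof.
  unfold term, rpow.
  repeat apply Rmult_le_pos; try (left; apply exp_pos).
  repeat destruct Req_EM_T; try lra; left; apply exp_pos.
Qed.

Lemma term_ge m i : (1 <= m)%nat -> (m <= i)%nat ->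
  Rpower (tau lambda m) a * Rpower (lambda i + lambda (S i)) (- (b + c)) <= term i.
Proof.
  intros hm hmi; unfold term.
  pose proof (hpos i); pose proof (hpos (S i)).
  rewrite rpow_pos_eq by (apply tau_pos; lia).
  rewrite Ropp_plus_distr, Rpower_plus, Rmult_assoc.
  apply Rmult_le_compat; try (left; apply exp_pos).
  - left; apply Rmult_lt_0_compat; apply exp_pos.
  - apply Rle_Rpower_l; auto; split; [apply tau_pos | apply tau_le]; lia.
  - apply Rmult_le_compat; try (left; apply exp_pos);
      apply Rpower_opp_le_compat; auto; lra.
Qed.

Lemma block_bound m n : (1 <= m)%nat -> (1 <= n)%nat ->
  Rpower (tau lambda m) a
  * (INR n * Rpower (2 * tau lambda (S (m + n)) / INR n) (- (b + c))) <= C2.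
Proof.
  intros hm hn.
  assert (hn' : 0 < INR n) by (apply lt_0_INR; lia).
  assert (hT : 0 < tau lambda (S (m + n))) by (apply tau_pos; lia).
  apply Rle_trans with
    (Rpower (tau lambda m) a
     * sum_from (fun i => Rpower (lambda i + lambda (S i)) (- (b + c))) m n).
  - apply Rmult_le_compat_l; [left; apply exp_pos |].
    apply sum_Rpower_opp_ge; try lra.
    + intro i; pose proof (hpos i); pose proof (hpos (S i)); lra.
    + apply Rdiv_lt_0_compat; lra.
    + replace (INR n * (2 * tau lambda (S (m + n)) / INR n))
        with (2 * tau lambda (S (m + n))) by (field; lra).
      apply sum_from_consecutive_le.
  - rewrite <- sum_from_scal.
    apply Rle_trans with (sum_from term m n).
    + apply sum_from_le; intros; apply term_ge; lia.
    + apply sum_from_le_of_partial_sums; [apply term_nonneg | exact hsum].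
Qed.

Lemma ln_block_bound m n : (1 <= m)%nat -> (1 <= n)%nat ->
  a * ln (tau lambda m) + (1 + (b + c)) * ln (INR n)
  <= ln C2 + (b + c) * (ln 2 + ln (tau lambda (S (m + n)))).
Proof.
  intros hm hn.
  assert (hn' : 0 < INR n) by (apply lt_0_INR; lia).
  assert (hT : 0 < tau lambda (S (m + n))) by (apply tau_pos; lia).
  assert (hA : 0 < 2 * tau lambda (S (m + n)) / INR n) by (apply Rdiv_lt_0_compat; lra).
  set (A := 2 * tau lambda (S (m + n)) / INR n) in *.
  assert (htm : 0 < Rpower (tau lambda m) a) by apply exp_pos.
  assert (hAs : 0 < Rpower A (- (b + c))) by apply exp_pos.
  assert (hnAs : 0 < INR n * Rpower A (- (b + c))) by (apply Rmult_lt_0_compat; auto).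
  pose proof (ln_le_compat _ _ (Rmult_lt_0_compat _ _ htm hnAs) (block_bound m n hm hn))
    as hblock; fold A in hblock.
  rewrite !ln_mult, !ln_Rpower in hblock by assumption.
  unfold A, Rdiv in hblock.
  rewrite ln_mult, ln_mult, ln_Rinv in hblock; try apply Rinv_0_lt_compat; lra.
Qed.

End Tau.

Lemma nondecreasing_ge_first (u : nat -> R) : (forall k, u k <= u (S k)) ->
  forall k, u 0%nat <= u k.
Proof. intros hu k; induction k as [|k IH]; [lra | specialize (hu k); lra]. Qed.

Lemma log_growth (u : nat -> R) (a s K : R) : 0 <= a -> a < s ->
  (forall k, u k <= u (S k)) ->
  (forall k, (4 <= k)%nat -> a * u (k / 2 - 1)%nat + (1 + s) * ln (INR k) <= s * u k + K) ->
  exists L, forall k, (1 <= k)%nat -> L + (s + 1) / (s - a) * ln (INR k) <= u k.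
Proof.
  intros ha has hmono hrec.
  set (p := (s + 1) / (s - a)).
  assert (hp : 0 < p) by (apply Rdiv_lt_0_compat; lra).
  assert (hps : p * s = a * p + 1 + s) by (unfold p; field; lra).
  set (L := Rmin (u 0%nat - p * ln 3) ((- (a * p * ln 8) - K) / (s - a))).
  assert (hL0 : L <= u 0%nat - p * ln 3) by apply Rmin_l.
  assert (hLK : (s - a) * L <= - (a * p * ln 8) - K).
  { assert (L <= (- (a * p * ln 8) - K) / (s - a)) by apply Rmin_r.
    apply (Rmult_le_compat_l (s - a)) in H; [| lra].
    replace ((s - a) * ((- (a * p * ln 8) - K) / (s - a))) with (- (a * p * ln 8) - K)
      in H by (field; lra); lra. }
  exists L; intros k; induction k as [k IH] using lt_wf_ind; intros hk.
  destruct (Nat.le_gt_cases k 3) as [hk3 | hk4].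
  - assert (ln (INR k) <= ln 3).
    { apply ln_le_compat; [apply lt_0_INR; lia |].
      apply le_INR in hk3; simpl in hk3; lra. }
    pose proof (nondecreasing_ge_first u hmono k); nra.
  - set (j := (k / 2 - 1)%nat).
    assert (hj : (1 <= j)%nat /\ (j < k)%nat /\ (k <= 8 * j)%nat).
    { pose proof (Nat.div_mod k 2 ltac:(lia)); pose proof (Nat.mod_upper_bound k 2 ltac:(lia)).
      unfold j; lia. }
    destruct hj as (hj1 & hjk & hk8j).
    pose proof (IH j hjk hj1) as hIH.
    pose proof (ln_INR_le_mult k 8 j hk hj1 hk8j) as hlnj.
    replace (INR 8) with 8 in hlnj by (simpl; lra).
    pose proof (hrec k ltac:(lia)) as hk_rec; fold j in hk_rec.
    assert (a * (L + p * ln (INR j)) <= a * u j) by (apply Rmult_le_compat_l; lra).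
    assert (a * p * ln (INR k) <= a * p * (ln 8 + ln (INR j))) by
      (apply Rmult_le_compat_l; [apply Rmult_le_pos |]; lra).
    assert (hpsk : p * s * ln (INR k) = (a * p + 1 + s) * ln (INR k)) by (rewrite hps; ring).
    assert (0 <= s * (u k - L - p * ln (INR k))) by nra.
    assert (0 <= u k - L - p * ln (INR k)) by (apply (Rmult_le_reg_l s); lra).
    lra.
Qed.

Theorem mainTheorem12 (lambda : nat -> R) (C2 a b c : R)
  (hpos : forall k, 0 < lambda k)
  (hC2 : 0 < C2) (ha : 0 <= a) (hb : 0 <= b) (hc : 0 <= c)
  (habc : a < b + c)
  (hsum : forall N : nat,
      sum_f_R0 (fun k => rpow (tau lambda k) a * Rpower (lambda k) (- b)
                          * Rpower (lambda (S k)) (- c)) N <= C2) :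
  exists C3 : R, 0 < C3 /\
    forall k : nat, (1 <= k)%nat ->
      C3 * Rpower (INR k) ((b + c + 1) / (b + c - a)) <= tau lambda (S k).
Proof.
  set (u := fun k => ln (tau lambda (S k))).
  destruct (log_growth u a (b + c) (ln C2 + (1 + 2 * (b + c)) * ln 2)) as [L hL]; auto.
  - intro k; apply ln_le_compat; [apply tau_pos | apply tau_le]; auto; lia.
  - intros k hk.
    set (m := (k / 2)%nat); set (n := (k - m)%nat).
    assert (hm : (1 <= m /\ m + n = k /\ 1 <= n /\ k <= 2 * n)%nat).
    { pose proof (Nat.div_mod k 2 ltac:(lia)); pose proof (Nat.mod_upper_bound k 2 ltac:(lia)).
      unfold n, m; lia. }
    destruct hm as (hm1 & hmn & hn1 & hk2n).
    pose proof (ln_block_bound lambda hpos a b c C2 ha hb hc hsum m n hm1 hn1) as hblock.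
    pose proof (ln_INR_le_mult k 2 n ltac:(lia) hn1 hk2n) as hlnn.
    replace (INR 2) with 2 in hlnn by (simpl; lra).
    assert ((1 + (b + c)) * ln (INR k) <= (1 + (b + c)) * (ln 2 + ln (INR n)))
      by (apply Rmult_le_compat_l; lra).
    replace (S (m + n)) with (S k) in hblock by lia.
    replace m with (S (m - 1)) in hblock by lia.
    unfold u; lra.
  - exists (exp L); split; [apply exp_pos |].
    intros k hk; specialize (hL k hk); unfold u in hL.
    unfold Rpower; rewrite <- exp_plus.
    rewrite <- (exp_ln (tau lambda (S k))) by (apply tau_pos; auto; lia).
    apply exp_le_compat; lra.
Qed.
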